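(* Let $k\ge 1$ and let $n,n_1,\dots,n_k\ge 1$ be integers; set $m=n+\sum_{j=1}^k n_j$. Define $\varphi(a)=(1-a)^k-\frac{a(m-n)+n}{m}$ for $0\le a\le 1$, and let $a_0\in(0,1)$ be the number such that $\varphi(a_0)=0$ and $\varphi(a)>0$ for all $a\in[0,a_0)$. Let $0<a\le a_0$, and let $z_1,\dots,z_k\in\mathbb{C}$ be pairwise distinct with $|z_j|\le 1$ and $z_j\neq a$ for $j=1,\dots,k$. Let $$p(z)=(z-a)^n\prod_{j=1}^{k}(z-z_j)^{n_j},\quad z\in\mathbb{C}.$$ Then there exists $\zeta\neq a$ such that $p'(\zeta)=0$ and $|a-\zeta|\le 1$.
   Context: The number $a_0$ exists since $\varphi(0)=(m-n)/m>0$ and $\varphi(1)=-1<0$; it is the smallest zero of $\varphi$ in $(0,1)$. *)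

From HB Require Import structures.
From mathcomp Require Import all_boot all_order all_algebra.
From mathcomp Require Import reals complex.
Set Implicit Arguments. Unset Strict Implicit. Unset Printing Implicit Defensive.
Import Order.TTheory GRing.Theory Num.Theory.
Local Open Scope ring_scope.

Definition mtot (k n : nat) (nn : 'I_k -> nat) : nat := (n + \sum_(j < k) nn j)%N.

Definition phi (R : realType) (k n : nat) (nn : 'I_k -> nat) (a : R) : R :=
  (1 - a) ^+ k - (a * ((mtot n nn)%:R - n%:R) + n%:R) / (mtot n nn)%:R.

Definition ppoly (R : realType) (k n : nat) (nn : 'I_k -> nat)
  (a : R[i]) (z : 'I_k -> R[i]) : {poly R[i]} :=
  ('X - a%:P) ^+ n * \prod_(j < k) ('X - (z j)%:P) ^+ (nn j).

From HB Require Import structures.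
From mathcomp Require Import all_boot all_order all_algebra.
From mathcomp Require Import reals complex ring.
Import Order.TTheory GRing.Theory Num.Theory.
Set Implicit Arguments. Unset Strict Implicit. Unset Printing Implicit Defensive.
Local Open Scope ring_scope.

(* Writing p = prod_x (X - x)^(e_x), one has p' = (prod_x (X - x)^(e_x - 1)) q
   with q = sum_x e_x prod_(y <> x) (X - y), a polynomial of degree k with
   leading coefficient m = sum_x e_x and q(a) <> 0.  If every root w of q
   satisfied |a - w| > 1, then |w| > 1 - a for all of them, so
   |q(0)| = m prod_w |w| > m (1 - a)^k; on the other hand, expanding q(0) along
   the root a and using |z_j| <= 1 gives |q(0)| <= n + a (m - n).  Together
   these say phi(a) < 0, which is impossible for 0 < a <= a0. *)

Section LogDerivative.
Variable F : comNzRingType.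
Implicit Types s : seq (F * nat).

(* [s] lists roots together with their multiplicities. *)
Definition roots_poly s := \prod_(x <- s) ('X - x.1%:P) ^+ x.2.
Definition roots_rad s := \prod_(x <- s) ('X - x.1%:P).
Definition roots_red s := \prod_(x <- s) ('X - x.1%:P) ^+ x.2.-1.
Definition total_mult s := sumn (map snd s).

(* The numerator of p'/p = sum_x x.2 / (X - x.1) over the denominator
   [roots_rad s]. *)
Fixpoint logder_num s : {poly F} :=
  if s is x :: s' then roots_rad s' *+ x.2 + ('X - x.1%:P) * logder_num s'
  else 0.

Lemma roots_poly_red_rad s : all (fun x => 0 < x.2)%N s ->
  roots_poly s = roots_red s * roots_rad s.
Proof.
elim: s => [|x s IH] /=.
  by rewrite /roots_poly /roots_red /roots_rad !big_nil mulr1.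
case/andP=> x_gt0 /IH s_eq.
rewrite /roots_poly /roots_red /roots_rad !big_cons.
rewrite -/(roots_poly s) -/(roots_red s) -/(roots_rad s) s_eq.
by case: x x_gt0 => c [|e] //= _; rewrite exprS; ring.
Qed.

Lemma deriv_roots_poly s : all (fun x => 0 < x.2)%N s ->
  (roots_poly s)^`() = roots_red s * logder_num s.
Proof.
elim: s => [|x s IH] /=.
  by rewrite /roots_poly /roots_red !big_nil derivC mul1r.
case/andP=> x_gt0 s_gt0; rewrite /roots_poly /roots_red !big_cons.
rewrite -/(roots_poly s) -/(roots_red s) derivM IH // deriv_exp derivXsubC.
rewrite roots_poly_red_rad //.
by case: x x_gt0 => c [|e] //= _; rewrite exprS; ring.
Qed.

Lemma root_deriv_roots_poly s w : all (fun x => 0 < x.2)%N s ->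
  root (logder_num s) w -> root (roots_poly s)^`() w.
Proof.
by move=> s_gt0 /rootP q_w; apply/rootP; rewrite deriv_roots_poly // hornerM q_w mulr0.
Qed.

Lemma size_logder_num_le s : (size (logder_num s) <= size s)%N.
Proof.
elim: s => [|x s IH] /=; first by rewrite size_poly0.
apply: (leq_trans (size_polyD _ _)); rewrite geq_max; apply/andP; split.
  rewrite -scaler_nat; apply: (leq_trans (size_scale_leq _ _)).
  by rewrite /roots_rad size_prod_XsubC.
by apply: (leq_trans (size_polyMleq _ _)); rewrite size_XsubC.
Qed.

Lemma coef_logder_num s : (logder_num s)`_(size s).-1 = (total_mult s)%:R.
Proof.
elim: s => [|x s IH] /=; first by rewrite coef0.
have lead_rad : (roots_rad s)`_(size s) = 1.
  have /monicP := monic_prod_XsubC s xpredT (fun x : F * nat => x.1).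
  by rewrite /lead_coef size_prod_XsubC.
rewrite /total_mult /= -/(total_mult s) coefD coefMn mulrBl coefB coefXM.
rewrite lead_rad [_ * logder_num s]mulrC coefMC.
rewrite [(logder_num s)`_(size s)]nth_default ?size_logder_num_le // mul0r subr0.
case: s IH {lead_rad} => [|y s] /= IH; first by rewrite addr0 addn0.
by rewrite IH natrD.
Qed.

Lemma size_logder_num s : (total_mult s)%:R != 0 :> F ->
  size (logder_num s) = size s.
Proof.
move=> mult_neq0; apply/eqP; rewrite eqn_leq size_logder_num_le /=.
rewrite leqNgt; apply: contra mult_neq0 => size_lt.
by rewrite -coef_logder_num nth_default // -ltnS (leq_trans size_lt) ?leqSpred.
Qed.

Lemma lead_coef_logder_num s : (total_mult s)%:R != 0 :> F ->
  lead_coef (logder_num s) = (total_mult s)%:R.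
Proof. by move=> mult_neq0; rewrite /lead_coef size_logder_num ?coef_logder_num. Qed.

End LogDerivative.

Section Bounds.
Variable C : numDomainType.
Implicit Types s : seq (C * nat).

Lemma horner_logder_num_head_neq0 x s :
  (0 < x.2)%N -> all (fun y => y.1 != x.1) s -> (logder_num (x :: s)).[x.1] != 0.
Proof.
move=> x_gt0 s_neq; rewrite /= hornerD hornerMn hornerM hornerXsubC subrr mul0r addr0.
rewrite mulrn_eq0 negb_or -lt0n x_gt0 /roots_rad horner_prod prodf_seq_neq0.
by apply: sub_all s_neq => y; rewrite hornerXsubC subr_eq0 eq_sym.
Qed.

Lemma norm_roots_rad0_le1 s : all (fun x => `|x.1| <= 1) s ->
  `|(roots_rad s).[0]| <= 1.
Proof.
rewrite /roots_rad horner_prod normr_prod.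
elim: s => [|x s IH] /=; first by rewrite big_nil.
case/andP=> x_le1 /IH s_le1; rewrite big_cons hornerXsubC sub0r normrN.
by apply: mulr_ile1 => //; apply: prodr_ge0 => *; apply: normr_ge0.
Qed.

Lemma norm_logder_num0_cons x s :
  `|(logder_num (x :: s)).[0]|
    <= x.2%:R * `|(roots_rad s).[0]| + `|x.1| * `|(logder_num s).[0]|.
Proof.
rewrite /= hornerD hornerMn hornerM hornerXsubC sub0r.
apply: (le_trans (ler_normD _ _)).
by rewrite normrMn normrM normrN mulr_natl.
Qed.

Lemma norm_logder_num0_le s : all (fun x => `|x.1| <= 1) s ->
  `|(logder_num s).[0]| <= (total_mult s)%:R.
Proof.
elim: s => [|x s IH] /=; first by rewrite horner0 normr0.
case/andP=> x_le1 s_le1; apply: (le_trans (norm_logder_num0_cons x s)).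
rewrite /total_mult /= -/(total_mult s) natrD; apply: lerD.
  by rewrite -[leRHS]mulr1 ler_wpM2l ?norm_roots_rad0_le1.
by rewrite -[leRHS]mul1r ler_pM ?IH.
Qed.

End Bounds.

Lemma root_near_or_norm_horner0_gt (C : numClosedFieldType) (q : {poly C}) (c : C) :
  (1 < size q)%N -> `|c| < 1 ->
  (exists2 w, root q w & `|c - w| <= 1)
  \/ `|lead_coef q| * (1 - `|c|) ^+ (size q).-1 < `|q.[0]|.
Proof.
move=> size_q c_lt1; have [r q_eq] := closed_field_poly_normal q.
have lead_gt0 : 0 < `|lead_coef q|.
  by rewrite normr_gt0 lead_coef_eq0 -size_poly_eq0 -lt0n (ltnW size_q).
have size_r : size r = (size q).-1.
  have := congr1 (fun p : {poly C} => size p) q_eq.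
  by rewrite /= size_scale ?size_prod_XsubC -?normr_gt0 // => ->.
case: (boolP (has (fun w => `|c - w| <= 1) r)).
  case/hasP=> w w_r near_w; left; exists w => //.
  by rewrite q_eq rootZ ?root_prod_XsubC // -normr_gt0.
move/hasPn=> far; right; have {}far w : w \in r -> 1 - `|c| < `|w|.
  move/far; rewrite -real_ltNge ?normr_real ?real1 // ltrBlDl => /lt_le_trans.
  by apply; apply: ler_normB.
rewrite [in X in _ < X]q_eq hornerZ horner_prod normrM normr_prod ltr_pM2l //.
have -> : (1 - `|c|) ^+ (size q).-1 = \prod_(w <- r) (1 - `|c|).
  by rewrite -size_r; elim: r {q_eq size_r far} => [|w r IH];
    rewrite ?big_nil ?big_cons ?exprS ?IH.
rewrite !big_seq; apply: ltr_prod => [|w w_r].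
  have : (0 < size r)%N by rewrite size_r -subn1 subn_gt0.
  by case: r {q_eq far size_r} => [|w r] //= _; rewrite mem_head.
by rewrite hornerXsubC sub0r normrN subr_ge0 (ltW c_lt1) far.
Qed.

Lemma logder_num_root_near (C : numClosedFieldType) (c : C) e (zs : seq (C * nat)) :
  (0 < e)%N -> (0 < size zs)%N -> `|c| < 1 -> all (fun x => `|x.1| <= 1) zs ->
  (exists2 w, root (logder_num ((c, e) :: zs)) w & `|c - w| <= 1)
  \/ (e + total_mult zs)%:R * (1 - `|c|) ^+ size zs
       < e%:R + `|c| * (total_mult zs)%:R.
Proof.
move=> e_gt0 zs_gt0 c_lt1 zs_le1; set q := logder_num _.
have mult_neq0 : (total_mult ((c, e) :: zs))%:R != 0 :> C.
  by rewrite pnatr_eq0 -lt0n (leq_trans e_gt0) ?leq_addr.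
have size_q : size q = (size zs).+1 by rewrite size_logder_num.
have size_q_gt1 : (1 < size q)%N by rewrite size_q ltnS.
have [near | far] := root_near_or_norm_horner0_gt size_q_gt1 c_lt1; [by left | right].
move: far; rewrite lead_coef_logder_num // normr_nat size_q => /lt_le_trans; apply.
apply: (le_trans (norm_logder_num0_cons _ _)); apply: lerD.
  by rewrite -[leRHS]mulr1 ler_wpM2l ?norm_roots_rad0_le1.
by rewrite ler_wpM2l ?norm_logder_num0_le.
Qed.

Lemma ppolyE (R : realType) k n (nn : 'I_k -> nat) (a : R[i]) (z : 'I_k -> R[i]) :
  ppoly n nn a z = roots_poly ((a, n) :: [seq (z j, nn j) | j <- index_enum 'I_k]).
Proof. by rewrite /ppoly /roots_poly big_cons big_map. Qed.

Lemma phi_lt0 (R : realType) k n (nn : 'I_k -> nat) (a : R) :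
  (0 < mtot n nn)%N ->
  (mtot n nn)%:R * (1 - (a%:C)%C) ^+ k
    < n%:R + (a%:C)%C * ((mtot n nn)%:R - n%:R) :> R[i] ->
  phi n nn a < 0.
Proof.
rewrite /phi; move: (mtot n nn) => M M_gt0.
rewrite -!(rmorph_nat (real_complex R)) -(rmorph1 (real_complex R)).
rewrite -!rmorphB -rmorphXn -!rmorphM -rmorphD ltcR.
by rewrite subr_lt0 ltr_pdivlMr ?ltr0n // mulrC [_ + n%:R]addrC.
Qed.

Theorem theorem2 (R : realType) (k n : nat) (nn : 'I_k -> nat)
  (a0 a : R) (z : 'I_k -> R[i]) :
  (1 <= k)%N -> (1 <= n)%N -> (forall j, (1 <= nn j)%N) ->
  0 < a0 < 1 ->
  phi n nn a0 = 0 ->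
  (forall b : R, 0 <= b < a0 -> 0 < phi n nn b) ->
  0 < a <= a0 ->
  injective z ->
  (forall j, `|z j| <= 1) ->
  (forall j, z j != (a%:C)%C) ->
  exists zeta : R[i], [/\ zeta != (a%:C)%C,
      ((ppoly n nn (a%:C)%C z)^`()).[zeta] = 0 &
      `|(a%:C)%C - zeta| <= 1].
Proof.
move=> k_ge1 n_ge1 nn_ge1 /andP[_ a0_lt1] phi_a0 phi_gt0 /andP[a_gt0 a_le_a0] _.
move=> z_le1 z_neq_a; set A := (a%:C)%C.
set zs := [seq (z j, nn j) | j <- index_enum 'I_k].
have size_zs : size zs = k by rewrite size_map -sum1_size sum1_card card_ord.
have zs_gt0 : (0 < size zs)%N by rewrite size_zs.
have mult_zs : total_mult zs = (mtot n nn - n)%N.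
  by rewrite /mtot addKn /total_mult -map_comp sumnE big_map.
have normA : `|A| = A by rewrite ger0_norm // lecR ltW.
have A_lt1 : `|A| < 1 by rewrite normA ltcR (le_lt_trans a_le_a0).
have zs_le1 : all (fun x => `|x.1| <= 1) zs.
  by rewrite all_map; apply/allP => j _; apply: z_le1.
have [[w q_w near_w] | far] := logder_num_root_near n_ge1 zs_gt0 A_lt1 zs_le1.
  have zs_neqA : all (fun x => x.1 != A) zs.
    by rewrite all_map; apply/allP => j _; apply: z_neq_a.
  have qA_neq0 : (logder_num ((A, n) :: zs)).[A] != 0.
    exact: (horner_logder_num_head_neq0 (x := (A, n))).
  exists w; split => //.
    by apply: contraNneq qA_neq0 => w_eq; rewrite w_eq in q_w.
  apply/rootP; rewrite ppolyE root_deriv_roots_poly //= n_ge1 all_map.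
  by apply/allP => j _; apply: nn_ge1.
have phi_ge0 : 0 <= phi n nn a.
  case: (ltgtP a a0) a_le_a0 => [a_lt_a0 _ | // | -> _]; last by rewrite phi_a0.
  by apply/ltW/phi_gt0; rewrite a_lt_a0 ltW.
suff : phi n nn a < 0 by rewrite ltNge phi_ge0.
apply: phi_lt0; first by rewrite (leq_trans n_ge1) ?leq_addr.
by move: far; rewrite normA size_zs mult_zs subnKC ?natrB ?leq_addr.
Qed.
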